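(* Let $\mathbf{A}$ be an algebra and let $\mathbf{E}\le\mathbf{F}\le\mathbf{A}^2$ be subalgebras such that $E$ Jónsson absorbs $\mathbf{F}$. Suppose $(a,a),(b,b)\in E$ for some $a,b\in A$ and there is a directed path from $a$ to $b$ in the digraph $(A,F)$. Then there is a directed path from $a$ to $b$ in the digraph $(A,E)$.
   Context: A binary relation $E\subseteq A^2$ is viewed as a digraph $(A,E)$ with edge set $E$. Jónsson absorption: a subuniverse $E$ of an algebra $\mathbf{F}$ Jónsson absorbs $\mathbf{F}$ if there are ternary terms $d_0,\dots,d_n$ such that $d_i(e,f,e')\in E$ for all $i$, all $e,e'\in E$, $f\in F$; $d_i(x,y,y)=d_{i+1}(x,x,y)$ for all $i<n$ and all $x,y\in F$; $d_0(x,y,z)=x$ and $d_n(x,y,z)=z$ for all $x,y,z\in F$. *)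

From mathcomp Require Import all_boot.
From Stdlib Require Import Relations.
Set Implicit Arguments. Unset Strict Implicit. Unset Printing Implicit Defensive.

Record signature := Signature { op_sym : Type; arity : op_sym -> nat }.

Definition interpretation (sg : signature) (A : Type) :=
  forall f : op_sym sg, ('I_(arity f) -> A) -> A.

Inductive term (sg : signature) (V : Type) : Type :=
| Var : V -> term sg V
| App : forall f : op_sym sg, ('I_(arity f) -> term sg V) -> term sg V.

Fixpoint eval (sg : signature) (A : Type) (I : interpretation sg A) (V : Type)
  (env : V -> A) (t : term sg V) : A :=
  match t with
  | Var x => env x
  | App f ts => I f (fun i => eval I env (ts i))
  end.

Definition sq_interp (sg : signature) (A : Type) (I : interpretation sg A)
  : interpretation sg (A * A) :=
  fun f args => (I f (fun i => (args i).1), I f (fun i => (args i).2)).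

Definition subuniverse (sg : signature) (B : Type) (J : interpretation sg B)
  (S : B -> Prop) : Prop :=
  forall (f : op_sym sg) (args : 'I_(arity f) -> B),
    (forall i, S (args i)) -> S (J f args).

Definition app3 (sg : signature) (B : Type) (J : interpretation sg B)
  (d : term sg 'I_3) (x y z : B) : B :=
  eval J (fun i : 'I_3 => match val i with 0 => x | 1 => y | _ => z end) d.

(* Jónsson absorption: the subuniverse E of the algebra F (here F is a
   subuniverse of the algebra (B, J), with the induced operations) Jónsson
   absorbs F via ternary terms d_0, ..., d_n. *)
Definition jonsson_absorbs (sg : signature) (B : Type) (J : interpretation sg B)
  (E F : B -> Prop) : Prop :=
  exists (n : nat) (d : nat -> term sg 'I_3),
    (forall i, i <= n -> forall e f e', E e -> F f -> E e' ->
        E (app3 J (d i) e f e'))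
    /\ (forall i, i < n -> forall x y, F x -> F y ->
        app3 J (d i) x y y = app3 J (d i.+1) x x y)
    /\ (forall x y z, F x -> F y -> F z -> app3 J (d 0) x y z = x)
    /\ (forall x y z, F x -> F y -> F z -> app3 J (d n) x y z = z).

Definition dipath (A : Type) (R : A * A -> Prop) (a b : A) : Prop :=
  clos_refl_trans A (fun x y => R (x, y)) a b.

(* The term operations d_i(a, -, b) map the digraph F into E, since the
   absorption terms send (E, F, E) into E and (a,a), (b,b) lie in E.  Hence the
   F-path from a to b yields an E-path from d_i(a,a,b) to d_i(a,b,b) for every
   i, and the Jónsson identities glue these into an E-path from
   d_0(a,a,b) = a to d_n(a,b,b) = b. *)
From mathcomp Require Import all_boot.
From Stdlib Require Import Relations FunctionalExtensionality.

Set Implicit Arguments.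
Unset Strict Implicit.

Lemma eval_sq_interp (sg : signature) (A V : Type) (I : interpretation sg A)
    (env : V -> A * A) (t : term sg V) :
  eval (sq_interp I) env t =
  (eval I (fun v => (env v).1) t, eval I (fun v => (env v).2) t).
Proof.
elim: t => [v | f ts IH] /=; first by case: (env v).
rewrite /sq_interp; congr pair; congr (I f); apply: functional_extensionality => i;
  by rewrite IH.
Qed.

Lemma app3_sq_interp (sg : signature) (A : Type) (I : interpretation sg A)
    (d : term sg 'I_3) (x y z : A * A) :
  app3 (sq_interp I) d x y z = (app3 I d x.1 y.1 z.1, app3 I d x.2 y.2 z.2).
Proof.
by rewrite /app3 eval_sq_interp; congr pair; congr eval;
  apply: functional_extensionality => i; case: (val i) => [|[|]].
Qed.

Lemma dipath_map (A B : Type) (R : A * A -> Prop) (S : B * B -> Prop) (h : A -> B) :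
  (forall x y, R (x, y) -> S (h x, h y)) ->
  forall u v, dipath R u v -> dipath S (h u) (h v).
Proof.
move=> hRS u v; elim=> [x y /hRS | x | x y z _ IHxy _ IHyz].
- exact: rt_step.
- exact: rt_refl.
- exact: rt_trans IHxy IHyz.
Qed.

Section JonssonChain.

Variables (sg : signature) (A : Type) (I : interpretation sg A).
Variables (E F : A * A -> Prop) (n : nat) (d : nat -> term sg 'I_3).
Hypothesis subEF : forall p, E p -> F p.
Hypothesis d_absorbs : forall i, i <= n -> forall e f e', E e -> F f -> E e' ->
  E (app3 (sq_interp I) (d i) e f e').
Hypothesis d_chain : forall i, i < n -> forall x y, F x -> F y ->
  app3 (sq_interp I) (d i) x y y = app3 (sq_interp I) (d i.+1) x x y.
Variables (a b : A).
Hypotheses (Eaa : E (a, a)) (Ebb : E (b, b)) (Fab : dipath F a b).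

Lemma dipath_absorption_term i : i <= n ->
  dipath E (app3 I (d i) a a b) (app3 I (d i) a b b).
Proof.
move=> le_in; apply: (dipath_map (h := fun u => app3 I (d i) a u b)) Fab => x y Fxy.
by have := d_absorbs le_in Eaa Fxy Ebb; rewrite app3_sq_interp.
Qed.

Lemma dipath_jonsson_chain i : i <= n ->
  dipath E (app3 I (d 0) a a b) (app3 I (d i) a b b).
Proof.
elim: i => [|i IH] le_in; first exact: dipath_absorption_term.
apply: rt_trans (IH (ltnW le_in)) _.
have := d_chain le_in (subEF Eaa) (subEF Ebb); rewrite !app3_sq_interp => -[->] _.
exact: dipath_absorption_term.
Qed.

End JonssonChain.

Theorem lemma2p6 (sg : signature) (A : Type) (I : interpretation sg A)
  (E F : A * A -> Prop) :
  subuniverse (sq_interp I) E ->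
  subuniverse (sq_interp I) F ->
  (forall p, E p -> F p) ->
  jonsson_absorbs (sq_interp I) E F ->
  forall a b : A, E (a, a) -> E (b, b) -> dipath F a b -> dipath E a b.
Proof.
move=> _ _ subEF [n [d [d_absorbs [d_chain [d_first d_last]]]]] a b Eaa Ebb Fab.
have [Fa Fb] := (subEF _ Eaa, subEF _ Ebb).
have := d_first (a, a) (a, a) (b, b) Fa Fa Fb; rewrite app3_sq_interp => -[first_a _].
have := d_last (a, a) (b, b) (b, b) Fa Fb Fb; rewrite app3_sq_interp => -[last_b _].
rewrite -[X in dipath E X _]first_a -[X in dipath E _ X]last_b.
exact: (dipath_jonsson_chain subEF d_absorbs d_chain Eaa Ebb Fab (leqnn n)).
Qed.
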